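(* Let $K$ be a commutative field and $q\in K$. Define a coproduct $\Delta'_q$ on $\mathcal{H}_{\mathcal{PP}}$ by, for every plane poset $P$, $$\Delta'_q(P)=\sum_{P_1P_2=P}q^{|P_1||P_2|}P_1\otimes P_2,$$ the sum running over pairs of plane posets $(P_1,P_2)$ (possibly empty) with $P_1P_2=P$. Then for all $x,y,z\in\mathcal{H}_{\mathcal{PP}}$, $\langle x\triangleleft y,z\rangle_q=\langle x\otimes y,\Delta'_q(z)\rangle_q$.
   Context: A plane poset is a finite set with two partial orders $\leq_h,\leq_r$ such that two distinct elements are $\leq_h$-comparable iff they are not $\leq_r$-comparable, considered up to isomorphism; $\mathcal{H}_{\mathcal{PP}}$ is the $K$-vector space with basis these isomorphism classes; $|P|$ is the cardinality. $PQ$ is the plane poset on $P\sqcup Q$ with $P,Q$ plane subposets, no $\leq_h$-comparability between $P$ and $Q$, and $x<_r y$ for $x\in P,y\in Q$; $P\triangleleft Q$ is the plane poset on $P\sqcup Q$ with $P,Q$ plane subposets, no $\leq_r$-comparability between $P$ and $Q$, and $x<_h y$ for $x\in P,y\in Q$; both extended bilinearly. On a plane poset, $x\leq y$ iff ($x\leq_h y$ or $x\leq_r y$) is a total order (known fact); for $P,Q$ of equal cardinality $\theta_{P,Q}$ is the increasing bijection $P\to Q$, and $P\leq Q$ means: $\theta_{P,Q}(x)\leq_h\theta_{P,Q}(y)$ in $Q$ implies $x\leq_h y$ in $P$. $\iota(P)=(P,\leq_r,\leq_h)$. The pairing: $\langle P,Q\rangle_q=q^{\phi(P,Q)}$ if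 $\iota(P)\leq Q$ and $0$ otherwise, extended bilinearly, with $\phi(P,Q)=\sharp\{(x,y)\in P^2\mid x<_r y,\ \theta_{P,Q}(x)<_h\theta_{P,Q}(y)\}+\sharp\{(x,y)\in P^2\mid x<_h y,\ \theta_{P,Q}(x)<_r\theta_{P,Q}(y)\}$ and $q^0=1$; $\langle a\otimes b,c\otimes d\rangle_q=\langle a,c\rangle_q\langle b,d\rangle_q$. *)

From HB Require Import structures.
From mathcomp Require Import all_boot all_order all_algebra.
Set Implicit Arguments. Unset Strict Implicit. Unset Printing Implicit Defensive.
Import GRing.Theory.
Local Open Scope ring_scope.

(* A (raw) finite set with two relations; a plane poset is such a structure
   satisfying [is_plane].  Plane posets are handled through representatives;
   all functions below are isomorphism invariant. *)
Record ppr := PPr { car : finType; ph : rel car; pr : rel car }.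

Definition porderb (T : finType) (R : rel T) : bool :=
  [&& [forall x, R x x],
      [forall x, forall y, (R x y && R y x) ==> (x == y)] &
      [forall x, forall y, forall z, (R x y && R y z) ==> R x z]].

Definition comparab (T : finType) (R : rel T) (x y : T) : bool := R x y || R y x.

Definition is_plane (P : ppr) : bool :=
  [&& porderb (@ph P), porderb (@pr P) &
      [forall x : car P, forall y : car P,
         (x != y) ==> (comparab (@ph P) x y == ~~ comparab (@pr P) x y)]].

Definition strict (T : finType) (R : rel T) (x y : T) : bool := (x != y) && R x y.

Definition tot_lt (P : ppr) (x y : car P) : bool := strict (fun a b => ph a b || pr a b) x y.

Definition rank (P : ppr) (x : car P) : nat := #|[pred y | tot_lt y x]|.

(* graph of the increasing bijection theta_{P,Q} : theta x = x' *)
Definition theta_rel (P Q : ppr) (x : car P) (x' : car Q) : bool := rank x == rank x'.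

(* P <= Q (for |P| = |Q|): theta(x) <=_h theta(y) in Q implies x <=_h y in P *)
Definition pp_le (P Q : ppr) : bool :=
  [forall x : car P, forall y : car P, forall x' : car Q, forall y' : car Q,
     [&& theta_rel x x', theta_rel y y' & ph x' y'] ==> ph x y].

Definition iota (P : ppr) : ppr := @PPr (car P) (@pr P) (@ph P).

Definition phi (P Q : ppr) : nat :=
  #|[pred xy : car P * car P | strict (@pr P) xy.1 xy.2 &&
       [exists x' : car Q, exists y' : car Q,
          [&& theta_rel xy.1 x', theta_rel xy.2 y' & strict (@ph Q) x' y']]]|
  + #|[pred xy : car P * car P | strict (@ph P) xy.1 xy.2 &&
       [exists x' : car Q, exists y' : car Q,
          [&& theta_rel xy.1 x', theta_rel xy.2 y' & strict (@pr Q) x' y']]]|.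

Definition pairing (K : fieldType) (q : K) (P Q : ppr) : K :=
  if (#|{: car P}| == #|{: car Q}|) && pp_le (iota P) Q then q ^+ phi P Q else 0.

Definition sum_rel (T U : finType) (RP : rel T) (RQ : rel U) (lr rl : bool)
  : rel (T + U)%type :=
  fun a b => match a, b with
             | inl x, inl y => RP x y
             | inr x, inr y => RQ x y
             | inl _, inr _ => lr
             | inr _, inl _ => rl
             end.

Definition tri (P Q : ppr) : ppr :=
  @PPr (car P + car Q)%type (sum_rel (@ph P) (@ph Q) true false)
                            (sum_rel (@pr P) (@pr Q) false false).

Definition concat (P Q : ppr) : ppr :=
  @PPr (car P + car Q)%type (sum_rel (@ph P) (@ph Q) false false)
                            (sum_rel (@pr P) (@pr Q) true false).

Definition restr (P : ppr) (A : {set car P}) : ppr :=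
  @PPr {x : car P | x \in A} (fun a b => ph (val a) (val b))
                              (fun a b => pr (val a) (val b)).

(* P = (P|S)(P|~S): exactly the relations of the product PQ across S and its complement *)
Definition is_split (P : ppr) (A : {set car P}) : bool :=
  [forall x : car P, forall y : car P, ((x \in A) && (y \notin A)) ==>
     [&& pr x y, ~~ pr y x, ~~ ph x y & ~~ ph y x]].

(* Delta'_q(P) as a formal sum of tensors (coefficient, P1, P2) *)
Definition Delta' (K : fieldType) (q : K) (P : ppr) : seq (K * ppr * ppr) :=
  [seq (q ^+ (#|A| * #|~: A|), restr A, restr (~: A))
  | A : {set car P} <- enum [set A : {set car P} | is_split A]].

(* Elements of H_PP are formal linear combinations: seq (K * ppr) *)
Definition tri_lin (K : fieldType) (x y : seq (K * ppr)) : seq (K * ppr) :=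
  [seq (a.1 * b.1, tri a.2 b.2) | a <- x, b <- y].

Definition Delta_lin (K : fieldType) (q : K) (z : seq (K * ppr)) : seq (K * ppr * ppr) :=
  flatten [seq [seq (c.1 * t.1.1, t.1.2, t.2) | t <- Delta' q c.2] | c <- z].

Definition pairing_lin (K : fieldType) (q : K) (x z : seq (K * ppr)) : K :=
  \sum_(a <- x) \sum_(c <- z) a.1 * c.1 * pairing q a.2 c.2.

Definition pairing2_lin (K : fieldType) (q : K) (x y : seq (K * ppr))
  (w : seq (K * ppr * ppr)) : K :=
  \sum_(a <- x) \sum_(b <- y) \sum_(t <- w)
     a.1 * b.1 * t.1.1 * pairing q a.2 t.1.2 * pairing q b.2 t.2.

Definition all_plane (K : Type) (x : seq (K * ppr)) : bool := all (fun a => is_plane a.2) x.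

(* In a plane poset the relation "<=_h or <=_r" is a total order, so the pairing
   <P <| Q, R>_q only compares elements of equal rank.  If a term P1 ⊗ P2 of
   Delta'_q(R) pairs nontrivially with P ⊗ Q, then P1 consists of the #|P|
   smallest elements of R; indeed every splitting set A of R (R = (R|A)(R|~A))
   is the initial segment of rank < #|A|.  So at most one term contributes.
   If that initial segment A0 splits R, the comparability condition and the
   exponent phi decompose along it, the pairs straddling A0 contributing the
   extra |P||Q| to phi; if it does not split R, a pair of elements violating
   the splitting condition violates iota(P <| Q) <= R, so both sides vanish. *)
From Pilot Require Import Defs.
From mathcomp Require Import all_boot all_order all_algebra.
From mathcomp Require Import zify.
Set Implicit Arguments. Unset Strict Implicit. Unset Printing Implicit Defensive.
Import GRing.Theory.

Section PlanePoset.
Variable P : ppr.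
Hypothesis planeP : is_plane P.

Lemma ph_antisym (x y : car P) : ph x y -> ph y x -> x = y.
Proof.
case/and3P: planeP => /and3P[_ /forallP H _] _ _ hxy hyx.
by move: (H x) => /forallP /(_ y); rewrite hxy hyx => /eqP.
Qed.

Lemma ph_trans (x y z : car P) : ph x y -> ph y z -> ph x z.
Proof.
case/and3P: planeP => /and3P[_ _ /forallP H] _ _ hxy hyz.
by move: (H x) => /forallP /(_ y) /forallP /(_ z); rewrite hxy hyz.
Qed.

Lemma pr_antisym (x y : car P) : pr x y -> pr y x -> x = y.
Proof.
case/and3P: planeP => _ /and3P[_ /forallP H _] _ hxy hyx.
by move: (H x) => /forallP /(_ y); rewrite hxy hyx => /eqP.
Qed.

Lemma pr_trans (x y z : car P) : pr x y -> pr y z -> pr x z.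
Proof.
case/and3P: planeP => _ /and3P[_ _ /forallP H] _ hxy hyz.
by move: (H x) => /forallP /(_ y) /forallP /(_ z); rewrite hxy hyz.
Qed.

Lemma comparab_ph_pr (x y : car P) :
  x != y -> (ph x y || ph y x) = ~~ (pr x y || pr y x).
Proof.
case/and3P: planeP => _ _ /forallP H nxy.
by move: (H x) => /forallP /(_ y); rewrite nxy => /eqP.
Qed.

Lemma tot_lt_irr (x y : car P) : tot_lt x y -> tot_lt y x -> False.
Proof.
rewrite /tot_lt /strict => /andP[nxy hxy] /andP[_ hyx].
move: (comparab_ph_pr nxy).
case/orP: hxy => hxy; case/orP: hyx => hyx.
- by move: nxy; rewrite (ph_antisym hxy hyx) eqxx.
- by rewrite hxy hyx orbT.
- by rewrite hxy hyx orbT.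
- by move: nxy; rewrite (pr_antisym hxy hyx) eqxx.
Qed.

Lemma tot_lt_trans (x y z : car P) : tot_lt x y -> tot_lt y z -> tot_lt x z.
Proof.
move=> lxy lyz; have /andP[nxy hxy] := lxy; have /andP[nyz hyz] := lyz.
have [exz|nxz] := eqVneq x z; first by subst z; case: (tot_lt_irr lxy lyz).
have Cxy := comparab_ph_pr nxy; have Cyz := comparab_ph_pr nyz.
have Cxz := comparab_ph_pr nxz.
rewrite /tot_lt /strict nxz /=.
case/orP: hxy => hxy; case/orP: hyz => hyz.
- by rewrite (ph_trans hxy hyz).
- case hxz : (ph x z) => //=; case hxz' : (pr x z) => //.
  move: Cxz; rewrite hxz hxz' /=; case hzx: (ph z x) => /=.
    by move=> _; move: Cyz; rewrite (ph_trans hzx hxy) orbT hyz.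
  by move=> /esym/negbFE hzx'; move: Cxy; rewrite (pr_trans hyz hzx') hxy orbT.
- case hxz : (ph x z) => //=; case hxz' : (pr x z) => //.
  move: Cxz; rewrite hxz hxz' /=; case hzx: (ph z x) => /=.
    by move=> _; move: Cxy; rewrite (ph_trans hyz hzx) orbT hxy.
  by move=> /esym/negbFE hzx'; move: Cyz; rewrite (pr_trans hzx' hxy) hyz orbT.
- by rewrite (pr_trans hxy hyz) orbT.
Qed.

Lemma tot_lt_total (x y : car P) : x != y -> tot_lt x y || tot_lt y x.
Proof.
move=> nxy; rewrite /tot_lt /strict nxy eq_sym nxy /=.
by move: (comparab_ph_pr nxy); case: (ph x y); case: (ph y x); case: (pr x y); case: (pr y x).
Qed.

Lemma rank_lt_mono (x y : car P) : tot_lt x y -> rank x < rank y.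
Proof.
move=> hxy; rewrite /rank; apply: proper_card; apply/properP; split.
  by apply/subsetP => z; rewrite !inE => hz; apply: tot_lt_trans hxy.
by exists x; rewrite !inE // /tot_lt /strict eqxx.
Qed.

Lemma rank_inj : injective (@rank P).
Proof.
move=> x y e; apply/eqP/negP => /negP nxy.
by case/orP: (tot_lt_total nxy) => /rank_lt_mono; rewrite e ltnn.
Qed.

End PlanePoset.

Lemma rank_lt_card (P : ppr) (x : car P) : rank x < #|{: car P}|.
Proof.
rewrite /rank; apply: proper_card; apply/properP; split; first exact/subsetP.
by exists x => //; rewrite inE /tot_lt /strict eqxx.
Qed.

Definition ord_rank (P : ppr) (x : car P) : 'I_#|{: car P}| := Ordinal (rank_lt_card x).

Lemma ord_rank_inj (P : ppr) : is_plane P -> injective (@ord_rank P).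
Proof. by move=> planeP x y /(congr1 val) /(rank_inj planeP). Qed.

Lemma rank_onto (P : ppr) : is_plane P ->
  forall i, i < #|{: car P}| -> exists x : car P, rank x = i.
Proof.
move=> planeP i hi.
have /codomP[x /(congr1 val) /= ->] := inj_card_onto (ord_rank_inj planeP)
  (eq_leq (card_ord _)) (Ordinal hi).
by exists x.
Qed.

Lemma card_rank_lt (P : ppr) k : is_plane P -> k <= #|{: car P}| ->
  #|[set x : car P | rank x < k]| = k.
Proof.
move=> planeP hk; rewrite -(card_imset _ (ord_rank_inj planeP)).
have -> : @ord_rank P @: [set x : car P | rank x < k] = widen_ord hk @: [set: 'I_k].
  apply/setP => i; apply/imsetP/imsetP.
    by case=> x; rewrite inE => hx ->; exists (Ordinal hx) => //; apply: val_inj.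
  case=> j _ ->; have [x ex] := rank_onto planeP (ltn_ord (widen_ord hk j)).
  by exists x; [rewrite inE ex; exact: ltn_ord j | exact: val_inj].
by rewrite card_imset ?cardsT ?card_ord // => u v [] /val_inj.
Qed.

Lemma card_sig_pred (T : finType) (A : {set T}) (p : pred T) :
  #|[pred y : {x : T | x \in A} | p (val y)]| = #|[pred x | (x \in A) && p x]|.
Proof.
rewrite -(card_imset _ val_inj); apply: eq_card => x; rewrite !inE.
apply/imsetP/andP => [[y hy ->]|[hA hp]]; first by rewrite inE in hy; split; [exact: valP|].
by exists (exist _ x hA); rewrite ?inE.
Qed.

Lemma card_sum_pred (T U : finType) (p : pred (T + U)) :
  #|p| = #|[pred x | p (inl x)]| + #|[pred y | p (inr y)]|.
Proof. by rewrite -!sum1_card big_sumType. Qed.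

Definition npairs (T U : finType) (f : T -> U -> bool) : nat :=
  \sum_(x : T) \sum_(y : U) (f x y : nat).

Lemma card_pairs (T U : finType) (f : T -> U -> bool) :
  #|[pred xy : T * U | f xy.1 xy.2]| = npairs f.
Proof.
rewrite /npairs pair_bigA /= -sum1_card big_mkcond /=.
by apply: eq_bigr => xy _; rewrite inE; case: (f _ _).
Qed.

Lemma npairs_sum (T U : finType) (f : T + U -> T + U -> bool) :
  npairs f = npairs (fun x y => f (inl x) (inl y)) + npairs (fun (x : T) (y : U) => f (inl x) (inr y))
    + (npairs (fun (x : U) (y : T) => f (inr x) (inl y)) + npairs (fun x y => f (inr x) (inr y))).
Proof.
rewrite /npairs big_sumType /=.
under eq_bigr do rewrite big_sumType.
by under [in X in _ + X]eq_bigr do rewrite big_sumType; rewrite !big_split.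
Qed.

Lemma eq_npairs (T U : finType) (f g : T -> U -> bool) : f =2 g -> npairs f = npairs g.
Proof. by move=> fg; apply: eq_bigr => x _; apply: eq_bigr => y _; rewrite fg. Qed.

Lemma npairs_true (T U : finType) : npairs (fun (x : T) (y : U) => true) = #|T| * #|U|.
Proof.
rewrite /npairs (eq_bigr (fun _ => #|U|)) => [|x _]; first by rewrite sum_nat_const.
by rewrite /= sum1_card.
Qed.

Lemma npairs_false (T U : finType) : npairs (fun (x : T) (y : U) => false) = 0.
Proof. by rewrite /npairs big1 // => x _; rewrite big1. Qed.

Lemma card_restr (P : ppr) (A : {set car P}) : #|{: car (restr A)}| = #|A|.
Proof. by rewrite /= card_sig; apply: eq_card => x; rewrite !inE. Qed.

Lemma card_tri (P Q : ppr) : #|{: car (tri P Q)}| = #|{: car P}| + #|{: car Q}|.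
Proof. exact: card_sum. Qed.

Lemma tot_lt_restr (P : ppr) (A : {set car P}) (a b : car (restr A)) :
  tot_lt a b = tot_lt (val a) (val b).
Proof. by rewrite /tot_lt /strict /= val_eqE. Qed.

Lemma rank_iota (P : ppr) (x : car P) : @rank (Defs.iota P) x = rank x.
Proof. by apply: eq_card => y; rewrite !inE /tot_lt /strict /= orbC. Qed.

Lemma rank_tri_inl (P Q : ppr) (x : car P) : @rank (tri P Q) (inl x) = rank x.
Proof.
by rewrite /rank card_sum_pred (eq_card0 (A := [pred y : car Q | _])) ?addn0.
Qed.

Lemma rank_tri_inr (P Q : ppr) (x : car Q) :
  @rank (tri P Q) (inr x) = #|{: car P}| + rank x.
Proof. by rewrite /rank card_sum_pred. Qed.

Definition rank_rel (Q : ppr) (s : rel (car Q)) (i j : nat) : bool :=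
  [exists x', exists y', [&& i == rank x', j == rank y' & s x' y']].

Lemma strict_restr (P : ppr) (A : {set car P}) (s : rel (car P)) (a b : car (restr A)) :
  strict (fun u v : car (restr A) => s (val u) (val v)) a b = strict s (val a) (val b).
Proof. by rewrite /strict val_eqE. Qed.

Section SplittingSet.
Variables (R : ppr) (A : {set car R}).
Hypothesis splitA : is_split A.

Lemma split_cross (a b : car R) : a \in A -> b \notin A ->
  [&& pr a b, ~~ pr b a, ~~ ph a b & ~~ ph b a].
Proof. by move=> ha hb; move: splitA => /forallP /(_ a) /forallP /(_ b); rewrite ha hb. Qed.

Lemma rank_restr_split (a : car (restr A)) : rank a = rank (val a).
Proof.
rewrite /rank (eq_card (B := [pred y : car (restr A) | tot_lt (val y) (val a)])).
  rewrite (card_sig_pred A (fun y => tot_lt y (val a))); apply: eq_card => y.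
  rewrite !inE; case hy: (y \in A) => //=.
  case/and4P: (split_cross (valP a) (negbT hy)) => _ hya _ hya'.
  by rewrite /tot_lt /strict (negbTE hya) (negbTE hya') andbF.
by move=> y; rewrite !inE tot_lt_restr.
Qed.

Lemma rank_restr_splitC (b : car (restr (~: A))) : rank (val b) = #|A| + rank b.
Proof.
have hb : val b \notin A by move: (valP b); rewrite inE.
rewrite /rank -(cardID (mem A) [pred y | tot_lt y (val b)]); congr (_ + _).
  apply: eq_card => y; rewrite !inE andbC; case hy: (y \in A) => //=.
  case/and4P: (split_cross hy hb) => hyb _ _ _.
  rewrite /tot_lt /strict hyb orbT andbT.
  by apply: contraTneq hy => ->; rewrite (negbTE hb).
rewrite (eq_card (B := [pred y : car (restr (~: A)) | tot_lt (val y) (val b)])).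
  rewrite (card_sig_pred (~: A) (fun y => tot_lt y (val b))).
  by apply: eq_card => y; rewrite !inE andbC; case: (y \in A).
by move=> y; rewrite !inE tot_lt_restr.
Qed.

Lemma mem_split_rank (x : car R) : (x \in A) = (rank x < #|A|).
Proof.
case hx: (x \in A).
  by rewrite -(rank_restr_split (exist _ x hx)) -card_restr rank_lt_card.
have hx' : x \in ~: A by rewrite inE hx.
by rewrite (rank_restr_splitC (exist _ x hx')) ltnNge leq_addr.
Qed.

Lemma rank_rel_restr_split (s : rel (car R)) (s' : rel (car (restr A))) i j :
  (forall a b, s' a b = s (val a) (val b)) -> i < #|A| -> j < #|A| ->
  rank_rel s i j = rank_rel s' i j.
Proof.
move=> ss' hi hj; apply/existsP/existsP.
  case=> x /existsP[y /and3P[/eqP ex /eqP ey sxy]].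
  have hx : x \in A by rewrite mem_split_rank -ex.
  have hy : y \in A by rewrite mem_split_rank -ey.
  exists (exist _ x hx); apply/existsP; exists (exist _ y hy).
  by rewrite ss' !rank_restr_split ex ey !eqxx.
case=> x /existsP[y /and3P[ex ey sxy]].
exists (val x); apply/existsP; exists (val y).
by rewrite -!rank_restr_split ex ey -ss'.
Qed.

Lemma rank_rel_restr_splitC (s : rel (car R)) (s' : rel (car (restr (~: A)))) i j :
  (forall a b, s' a b = s (val a) (val b)) ->
  rank_rel s (#|A| + i) (#|A| + j) = rank_rel s' i j.
Proof.
move=> ss'; apply/existsP/existsP.
  case=> x /existsP[y /and3P[/eqP ex /eqP ey sxy]].
  have hx : x \in ~: A by rewrite inE mem_split_rank -ex -leqNgt leq_addr.
  have hy : y \in ~: A by rewrite inE mem_split_rank -ey -leqNgt leq_addr.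
  exists (exist _ x hx); apply/existsP; exists (exist _ y hy).
  move: (rank_restr_splitC (exist _ x hx)) (rank_restr_splitC (exist _ y hy)) => /=.
  by rewrite ss' -ex -ey => /addnI -> /addnI ->; rewrite !eqxx.
case=> x /existsP[y /and3P[ex ey sxy]].
exists (val x); apply/existsP; exists (val y).
by rewrite !rank_restr_splitC !eqn_add2l ex ey -ss'.
Qed.

Lemma rank_rel_ph_split_cross i j : i < #|A| ->
  ~~ rank_rel (@ph R) i (#|A| + j) && ~~ rank_rel (@ph R) (#|A| + j) i.
Proof.
move=> hi.
apply/andP; split; apply/existsP => -[x /existsP[y /and3P[/eqP ex /eqP ey hxy]]].
- have hx : x \in A by rewrite mem_split_rank -ex.
  have hy : y \notin A by rewrite mem_split_rank -ey -leqNgt leq_addr.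
  by case/and4P: (split_cross hx hy) => _ _; rewrite hxy.
- have hy : y \in A by rewrite mem_split_rank -ey.
  have hx : x \notin A by rewrite mem_split_rank -ex -leqNgt leq_addr.
  by case/and4P: (split_cross hy hx) => _ _ _; rewrite hxy.
Qed.

Lemma rank_rel_pr_split_cross i j : is_plane R -> i < #|A| -> #|A| + j < #|{: car R}| ->
  rank_rel (strict (@pr R)) i (#|A| + j).
Proof.
move=> planeR hi hj.
have [x ex] := rank_onto planeR (ltn_trans (leq_trans hi (leq_addr j _)) hj).
have [y ey] := rank_onto planeR hj.
have hx : x \in A by rewrite mem_split_rank ex.
have hy : y \notin A by rewrite mem_split_rank ey -leqNgt leq_addr.
apply/existsP; exists x; apply/existsP; exists y.
rewrite ex ey !eqxx /strict; case/and4P: (split_cross hx hy) => -> _ _ _.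
by rewrite andbT; apply: contraNneq hy => <-.
Qed.

End SplittingSet.

Lemma pp_leE (P Q : ppr) :
  pp_le P Q = [forall x : car P, forall y : car P, rank_rel (@ph Q) (rank x) (rank y) ==> ph x y].
Proof.
apply/forallP/forallP => H x; apply/forallP => y.
  apply/implyP => /existsP[x' /existsP[y' hxy]].
  by move: (H x) => /forallP /(_ y) /forallP /(_ x') /forallP /(_ y') /implyP; apply.
apply/forallP => x'; apply/forallP => y'; apply/implyP => hxy.
by move: (H x) => /forallP /(_ y) /implyP; apply; apply/existsP; exists x'; apply/existsP; exists y'.
Qed.

Lemma phiE (P Q : ppr) : phi P Q =
  npairs (fun x y : car P => strict (@pr P) x y && rank_rel (strict (@ph Q)) (rank x) (rank y)) +
  npairs (fun x y : car P => strict (@ph P) x y && rank_rel (strict (@pr Q)) (rank x) (rank y)).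
Proof. by rewrite /phi -!card_pairs. Qed.

Section TriSplit.
Variables (P Q R : ppr) (A : {set car R}).
Hypothesis splitA : is_split A.
Hypothesis cardA : #|A| = #|{: car P}|.

Let rank_ltA (x : car P) : rank x < #|A|.
Proof. by rewrite cardA rank_lt_card. Qed.

Lemma pp_le_tri_split :
  pp_le (Defs.iota (tri P Q)) R =
  pp_le (Defs.iota P) (restr A) && pp_le (Defs.iota Q) (restr (~: A)).
Proof.
have restrL (x y : car P) :
    rank_rel (@ph R) (rank x) (rank y) = rank_rel (@ph (restr A)) (rank x) (rank y).
  exact: rank_rel_restr_split.
have restrR (x y : car Q) : rank_rel (@ph R) (#|A| + rank x) (#|A| + rank y) =
                  rank_rel (@ph (restr (~: A))) (rank x) (rank y).
  exact: rank_rel_restr_splitC.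
rewrite !pp_leE; apply/idP/andP.
  move/forallP => H; split; apply/forallP => x; apply/forallP => y; apply/implyP => hxy.
    move: (H (inl x)) => /forallP /(_ (inl y)) /implyP; apply.
    by rewrite !rank_iota !rank_tri_inl restrL; rewrite !rank_iota in hxy.
  move: (H (inr x)) => /forallP /(_ (inr y)) /implyP; apply.
  by rewrite !rank_iota !rank_tri_inr -cardA restrR; rewrite !rank_iota in hxy.
case=> /forallP HP /forallP HQ; apply/forallP => u; apply/forallP => v; apply/implyP.
have hcross := rank_rel_ph_split_cross splitA.
case: u => x; case: v => y; rewrite !rank_iota ?rank_tri_inl ?rank_tri_inr -?cardA => hxy.
- by move: (HP x) => /forallP /(_ y) /implyP; apply; rewrite !rank_iota -restrL.
- by case/andP: (hcross (rank x) (rank y) (rank_ltA x)); rewrite hxy.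
- by case/andP: (hcross (rank y) (rank x) (rank_ltA y)); rewrite hxy.
- by move: (HQ x) => /forallP /(_ y) /implyP; apply; rewrite !rank_iota -restrR.
Qed.

Hypothesis planeR : is_plane R.
Hypothesis cardAC : #|~: A| = #|{: car Q}|.

Lemma phi_tri_split :
  phi (tri P Q) R = phi P (restr A) + phi Q (restr (~: A)) + #|{: car P}| * #|{: car Q}|.
Proof.
have cardR : #|{: car R}| = #|A| + #|{: car Q}| by rewrite -cardAC cardsC.
have restrL (s : rel (car R)) (x y : car P) :
    rank_rel (strict s) (rank x) (rank y) =
    rank_rel (strict (fun u v : car (restr A) => s (val u) (val v))) (rank x) (rank y).
  by apply: (rank_rel_restr_split splitA) => // a b; rewrite strict_restr.
have restrR (s : rel (car R)) (x y : car Q) :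
    rank_rel (strict s) (#|A| + rank x) (#|A| + rank y) =
    rank_rel (strict (fun u v : car (restr (~: A)) => s (val u) (val v))) (rank x) (rank y).
  by apply: (rank_rel_restr_splitC splitA) => a b; rewrite strict_restr.
transitivity (
  (npairs (fun x y : car P => strict (@pr P) x y && rank_rel (strict (@ph (restr A))) (rank x) (rank y))
    + npairs (fun (x : car P) (y : car Q) => false))
  + (npairs (fun (x : car Q) (y : car P) => false)
    + npairs (fun x y : car Q => strict (@pr Q) x y && rank_rel (strict (@ph (restr (~: A)))) (rank x) (rank y)))
  + ((npairs (fun x y : car P => strict (@ph P) x y && rank_rel (strict (@pr (restr A))) (rank x) (rank y))
      + npairs (fun (x : car P) (y : car Q) => true))
  + (npairs (fun (x : car Q) (y : car P) => false)
    + npairs (fun x y : car Q => strict (@ph Q) x y && rank_rel (strict (@pr (restr (~: A)))) (rank x) (rank y))))); last first.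
  by rewrite !phiE !npairs_false npairs_true; lia.
rewrite phiE !npairs_sum.
congr (_ + _ + (_ + _) + ((_ + _) + (_ + _))); apply: eq_npairs => x y /=;
  rewrite ?rank_tri_inl ?rank_tri_inr -?cardA ?restrL ?restrR //.
by apply: rank_rel_pr_split_cross; rewrite // cardR ltn_add2l rank_lt_card.
Qed.

End TriSplit.

Lemma is_split_rank_segment (R : ppr) k : is_plane R ->
  (forall a b : car R, rank a < k <= rank b -> ~~ ph a b && ~~ ph b a) ->
  is_split [set x : car R | rank x < k].
Proof.
move=> planeR noph; apply/forallP => a; apply/forallP => b.
rewrite !inE -leqNgt; apply/implyP => hab; have /andP[ha hb] := hab.
have /andP[nab nba] := noph a b hab.
have neq : a != b by apply: contraTneq ha => ->; rewrite -leqNgt.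
have npba : ~~ pr b a.
  apply: contraTN ha => pba; rewrite -leqNgt (leq_trans hb) // ltnW //.
  by rewrite (rank_lt_mono planeR) // /tot_lt /strict eq_sym neq pba orbT.
move: (comparab_ph_pr planeR neq).
by rewrite nab nba npba (negbTE nab) (negbTE nba) (negbTE npba) !orbF !andbT => /esym/negbFE.
Qed.

Lemma pp_le_tri_nonsplit (P Q R : ppr) : is_plane P -> is_plane Q -> is_plane R ->
  #|{: car P}| + #|{: car Q}| = #|{: car R}| ->
  ~~ is_split [set r : car R | rank r < #|{: car P}|] ->
  pp_le (Defs.iota (tri P Q)) R = false.
Proof.
move=> planeP planeQ planeR cardR; apply: contraNF => le.
apply: is_split_rank_segment => // a b /andP[ha hb].
have hb' : rank b - #|{: car P}| < #|{: car Q}|.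
  by rewrite ltn_subLR // cardR rank_lt_card.
have [x ex] := rank_onto planeP ha; have [y ey] := rank_onto planeQ hb'.
have noph (u v : car (tri P Q)) (c d : car R) :
    rank c = rank u -> rank d = rank v -> ~~ pr u v -> ~~ ph c d.
  move=> ec ed; apply: contra => hcd; move: le; rewrite pp_leE.
  move=> /forallP /(_ u) /forallP /(_ v) /implyP; apply.
  by apply/existsP; exists c; apply/existsP; exists d; rewrite !rank_iota ec ed !eqxx.
by rewrite (noph (inl x) (inr y)) ?(noph (inr y) (inl x)) ?rank_tri_inl ?rank_tri_inr ?ex ?ey ?subnKC.
Qed.

Local Open Scope ring_scope.

Lemma pairing_card_neq (K : fieldType) (q : K) (P Q : ppr) :
  #|{: car P}| != #|{: car Q}| -> pairing q P Q = 0.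
Proof. by rewrite /pairing => /negbTE ->. Qed.

Lemma pairing_tri_split (K : fieldType) (q : K) (P Q R : ppr) (A : {set car R}) :
  is_plane R -> is_split A -> #|A| = #|{: car P}| -> #|~: A| = #|{: car Q}| ->
  pairing q (tri P Q) R =
  q ^+ (#|A| * #|~: A|) * pairing q P (restr A) * pairing q Q (restr (~: A)).
Proof.
move=> planeR splitA cardA cardAC.
rewrite /pairing card_tri !card_restr -cardA -cardAC cardsC !eqxx /=.
rewrite (pp_le_tri_split Q splitA cardA) (phi_tri_split splitA cardA planeR cardAC) cardA cardAC.
case: pp_le; case: pp_le; rewrite ?mulr0 ?mul0r //=.
by rewrite -!exprD; congr (_ ^+ _); lia.
Qed.

Lemma pairing_tri (K : fieldType) (q : K) (P Q R : ppr) :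
  is_plane P -> is_plane Q -> is_plane R ->
  pairing q (tri P Q) R = \sum_(t <- Delta' q R) t.1.1 * pairing q P t.1.2 * pairing q Q t.2.
Proof.
move=> planeP planeQ planeR; rewrite /Delta' big_map big_enum /=.
set kP := #|{: car P}|; set kQ := #|{: car Q}|.
set A0 := [set x : car R | (rank x < kP)%N].
pose term (A : {set car R}) :=
  q ^+ (#|A| * #|~: A|) * pairing q P (restr A) * pairing q Q (restr (~: A)).
have term0 (A : {set car R}) : ~~ ((#|A| == kP) && (#|~: A| == kQ)) -> term A = 0.
  case/nandP => neq; rewrite /term.
    by rewrite (@pairing_card_neq _ q P) ?mulr0 ?mul0r // card_restr eq_sym.
  by rewrite (@pairing_card_neq _ q Q) ?mulr0 // card_restr eq_sym.
have [cardR|cardR] := eqVneq (kP + kQ)%N #|{: car R}|; last first.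
  rewrite pairing_card_neq ?card_tri // big1 // => A _.
  by apply: term0; apply: contra cardR => /andP[/eqP <- /eqP <-]; rewrite cardsC.
have cardA0 : #|A0| = kP by apply: card_rank_lt; rewrite // -cardR leq_addr.
have cardA0C : #|~: A0| = kQ.
  by apply/eqP; rewrite -(eqn_add2l kP) -{1}cardA0 cardsC cardR.
have other0 (A : {set car R}) : is_split A -> A != A0 -> term A = 0.
  move=> splitA neA; apply: term0; apply: contra neA => /andP[/eqP cardA _].
  by apply/eqP/setP => x; rewrite inE (mem_split_rank splitA) cardA.
have [splitA0|nsplitA0] := boolP (is_split A0).
  rewrite (bigD1 A0) ?inE //= big1 ?addr0 => [|A /andP[]]; last by rewrite inE; exact: other0.
  exact: pairing_tri_split.
rewrite /pairing pp_le_tri_nonsplit // andbF big1 // => A; rewrite inE => splitA.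
by apply: other0 => //; apply: contraNneq nsplitA0 => <-.
Qed.

Theorem proposition24 (K : fieldType) (q : K) (x y z : seq (K * ppr)) :
  all_plane x -> all_plane y -> all_plane z ->
  pairing_lin q (tri_lin x y) z = pairing2_lin q x y (Delta_lin q z).
Proof.
move=> /all_filterP planex /all_filterP planey /all_filterP planez.
rewrite /pairing_lin /pairing2_lin /tri_lin /Delta_lin big_allpairs_dep /=.
rewrite -planex !big_filter; apply: eq_bigr => a planea.
rewrite -planey !big_filter; apply: eq_bigr => b planeb.
rewrite big_flatten big_map -planez !big_filter; apply: eq_bigr => c planec.
rewrite big_map (pairing_tri q planea planeb planec) mulr_sumr.
by apply: eq_bigr => t _ /=; rewrite !mulrA.
Qed.
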